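(* Let $p\geq 2$ be an integer. Then \[ c_0\!\left(\frac{1}{p}\right)=\frac{p(p-1)(p-2)}{\pi}\sum_{k\geq 0}\frac{\left(k+1-\frac{p}{2}\left\lfloor\frac{k}{p}\right\rfloor\right)\left(\left\lfloor\frac{k}{p}\right\rfloor+1\right)}{(k+1)(k+p+1)(k+2)(k+p)} . \]
   Context: For a positive integer $p$ and an integer $q$ with $1\le q\le p-1$ and $\gcd(p,q)=1$, the cotangent sum is $c_0\!\left(\frac{q}{p}\right)=-\sum_{k=1}^{p-1}\frac{k}{p}\cot\frac{\pi k q}{p}$. Here $\lfloor\cdot\rfloor$ is the floor function. *)

From Stdlib Require Import Reals Lra Lia.
Open Scope R_scope.

Definition cot (x : R) : R := cos x / sin x.

(* c_0(q/p) = - sum_{k=1}^{p-1} (k/p) cot(pi k q / p), for naturals p, q. *)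
Definition c0 (q p : nat) : R :=
  - sum_f 1 (p - 1)
      (fun k => (INR k / INR p) * cot (PI * INR k * INR q / INR p)).

Definition c0_term (p k : nat) : R :=
  let fl := INR (Nat.div k p) in
  ((INR k + 1 - INR p / 2 * fl) * (fl + 1)) /
  ((INR k + 1) * (INR k + INR p + 1) * (INR k + 2) * (INR k + INR p)).

From Stdlib Require Import Reals Lra Lia.
From Coquelicot Require Import Coquelicot.
Open Scope R_scope.

(* The terms are nonnegative and at most 1/((k+1)(k+2)), so the series
   converges.  On each block of indices k = n p + r (0 <= r < p) we have
   floor(k/p) = n, and a partial fraction decomposition shows that
   p(p-1)(p-2) times the sum of the first N blocks equals
     Σ_j cot(π j/p) F_{Np}(2π j/p) + (terms of size O(1/N)),
   where F_L(t) = Σ_{m=1}^{L} sin(m t)/m; the link between the two sides is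
   Σ_j cot(π j/p) sin(2π r j/p) = p - 2r.  Since F_L(t) -> (π - t)/2 with error
   O(1/L), the limit is Σ_j cot(π j/p)(π - 2π j/p)/2 = π c_0(1/p), the constant
   part dropping out because Σ_j cot(π j/p) = 0. *)

Fixpoint sum_lt (f : nat -> R) (n : nat) : R :=
  match n with O => 0 | S n => sum_lt f n + f n end.

Lemma sum_lt_ext f g n : (forall i, (i < n)%nat -> f i = g i) -> sum_lt f n = sum_lt g n.
Proof. induction n; simpl; intros H; auto. rewrite IHn, H; auto. Qed.

Lemma sum_lt_add f g n : sum_lt (fun i => f i + g i) n = sum_lt f n + sum_lt g n.
Proof. induction n; simpl; [ring | rewrite IHn; ring]. Qed.

Lemma sum_lt_sub f g n : sum_lt (fun i => f i - g i) n = sum_lt f n - sum_lt g n.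
Proof. induction n; simpl; [ring | rewrite IHn; ring]. Qed.

Lemma sum_lt_scal_l c f n : sum_lt (fun i => c * f i) n = c * sum_lt f n.
Proof. induction n; simpl; [ring | rewrite IHn; ring]. Qed.

Lemma sum_lt_scal_r c f n : sum_lt (fun i => f i * c) n = sum_lt f n * c.
Proof. induction n; simpl; [ring | rewrite IHn; ring]. Qed.

Lemma sum_lt_const c n : sum_lt (fun _ => c) n = INR n * c.
Proof. induction n; simpl sum_lt; [simpl; ring | rewrite IHn, S_INR; ring]. Qed.

Lemma sum_lt_Sl f n : sum_lt f (S n) = f O + sum_lt (fun i => f (S i)) n.
Proof. induction n; simpl in *; [ring | rewrite IHn; ring]. Qed.

Lemma sum_lt_shift g n : sum_lt (fun r => g (S r)) n = sum_lt g n - g O + g n.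
Proof. pose proof (sum_lt_Sl g n) as H. simpl in H. lra. Qed.

Lemma sum_lt_split f a b : sum_lt f (a + b) = sum_lt f a + sum_lt (fun i => f (a + i)%nat) b.
Proof.
  induction b; simpl.
  - rewrite Nat.add_0_r; ring.
  - rewrite Nat.add_succ_r; simpl; rewrite IHb; ring.
Qed.

Lemma sum_lt_blocks f N p :
  sum_lt f (N * p) = sum_lt (fun n => sum_lt (fun r => f (n * p + r)%nat) p) N.
Proof.
  induction N; simpl; auto.
  replace (p + N * p)%nat with (N * p + p)%nat by lia. rewrite sum_lt_split, IHN. reflexivity.
Qed.

Lemma sum_lt_swap (f : nat -> nat -> R) n m :
  sum_lt (fun i => sum_lt (fun j => f i j) m) n = sum_lt (fun j => sum_lt (fun i => f i j) n) m.
Proof.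
  induction n; simpl.
  - induction m; simpl; auto. rewrite <- IHm; ring.
  - rewrite IHn, <- sum_lt_add. reflexivity.
Qed.

Lemma sum_lt_rev f n : sum_lt f n = sum_lt (fun i => f (n - 1 - i)%nat) n.
Proof.
  induction n; auto.
  change (sum_lt f (S n)) with (sum_lt f n + f n).
  rewrite (sum_lt_Sl (fun i => f (S n - 1 - i)%nat)).
  replace (S n - 1 - 0)%nat with n by lia.
  rewrite IHn, Rplus_comm. f_equal. apply sum_lt_ext; intros i Hi. f_equal; lia.
Qed.

Lemma sum_f_R0_sum_lt f n : sum_f_R0 f n = sum_lt f (S n).
Proof. induction n; simpl in *; [ring | rewrite IHn; reflexivity]. Qed.

Lemma sum_lt_le f g n : (forall i, (i < n)%nat -> f i <= g i) -> sum_lt f n <= sum_lt g n.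
Proof. induction n; simpl; intros H; [lra | apply Rplus_le_compat; auto]. Qed.

Lemma sum_lt_nonneg f n : (forall i, (i < n)%nat -> 0 <= f i) -> 0 <= sum_lt f n.
Proof.
  intros H. apply Rle_trans with (sum_lt (fun _ => 0) n).
  - rewrite sum_lt_const; lra.
  - apply sum_lt_le; auto.
Qed.

Lemma sum_lt_abs_le f g n :
  (forall i, (i < n)%nat -> Rabs (f i) <= g i) -> Rabs (sum_lt f n) <= sum_lt g n.
Proof.
  induction n; simpl; intros H.
  - rewrite Rabs_R0; lra.
  - eapply Rle_trans; [apply Rabs_triang | apply Rplus_le_compat; auto].
Qed.

Lemma sum_lt_INR_S n : sum_lt (fun r => INR (S r)) n = INR n * (INR n + 1) / 2.
Proof. induction n; cbn [sum_lt]; [simpl; field | rewrite IHn, !S_INR; field]. Qed.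

Lemma sum_lt_inv_consecutive n :
  sum_lt (fun k => / ((INR k + 1) * (INR k + 2))) n = 1 - / (INR n + 1).
Proof.
  induction n; cbn [sum_lt]; [simpl; field |].
  rewrite IHn, S_INR. pose proof (pos_INR n). field. lra.
Qed.

Lemma Rdiv_le_cross a b c d : 0 < b -> 0 < d -> a * d <= c * b -> a / b <= c / d.
Proof.
  intros Hb Hd H.
  assert (E : a / b - c / d = (a * d - c * b) / (b * d)) by (field; lra).
  assert ((a * d - c * b) / (b * d) <= 0).
  { unfold Rdiv. assert (0 < / (b * d)) by (apply Rinv_0_lt_compat; nra). nra. }
  lra.
Qed.

Lemma Rabs_div_le_inv u D E : -1 <= u <= 1 -> 0 < E <= D -> Rabs (u / D) <= / E.
Proof.
  intros Hu HE. assert (0 < / D) by (apply Rinv_0_lt_compat; lra).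
  assert (/ D <= / E) by (apply Rinv_le_contravar; lra).
  apply Rabs_le. unfold Rdiv. split; nra.
Qed.

Lemma Un_cv_of_inv_bound (u : nat -> R) V K : 0 <= K ->
  (forall N, Rabs (u N - V) <= K / (INR N + /2)) -> Un_cv u V.
Proof.
  intros HK H eps Heps.
  destruct (archimed_cor1 (eps / (K + 1))) as [N0 [HN0 HN0p]].
  { apply Rdiv_lt_0_compat; lra. }
  exists N0. intros n Hn. unfold Rdist.
  assert (HI : INR N0 <= INR n) by (apply le_INR; lia).
  assert (0 < INR N0) by (apply lt_0_INR; lia).
  apply Rle_lt_trans with (K * / INR N0).
  - eapply Rle_trans; [apply H |].
    unfold Rdiv. apply Rmult_le_compat_l; auto. apply Rinv_le_contravar; lra.
  - apply Rle_lt_trans with (K * (eps / (K + 1))); [apply Rmult_le_compat_l; lra |].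
    apply Rmult_lt_reg_l with (K + 1); [lra |].
    replace ((K + 1) * (K * (eps / (K + 1)))) with (K * eps) by (field; lra). nra.
Qed.

Lemma Un_cv_subseq (u : nat -> R) l (f : nat -> nat) :
  (forall N, (N <= f N)%nat) -> Un_cv u l -> Un_cv (fun N => u (f N)) l.
Proof.
  intros Hf H eps Heps. destruct (H eps Heps) as [N0 HN0].
  exists N0. intros n Hn. apply HN0. specialize (Hf n). lia.
Qed.

Lemma INR_ge2 p : (2 <= p)%nat -> 2 <= INR p.
Proof. intros Hp. replace 2 with (INR 2) by (simpl; ring). apply le_INR, Hp. Qed.

Lemma sin_INR_mul_PI n : sin (INR n * PI) = 0.
Proof.
  induction n; [simpl; rewrite Rmult_0_l; apply sin_0 |].
  rewrite S_INR, Rmult_plus_distr_r, Rmult_1_l, neg_sin, IHn. ring.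
Qed.

Lemma sin_PI_frac_pos k p : (0 < k < p)%nat -> 0 < sin (PI * INR k / INR p).
Proof.
  intros H. pose proof PI_RGT_0.
  assert (INR k < INR p) by (apply lt_INR; lia).
  assert (0 < INR k) by (apply lt_0_INR; lia).
  apply sin_gt_0.
  - apply Rdiv_lt_0_compat; [apply Rmult_lt_0_compat |]; lra.
  - apply Rmult_lt_reg_r with (INR p); [lra |].
    unfold Rdiv. rewrite Rmult_assoc, Rinv_l by lra. nra.
Qed.

Lemma dirichlet_kernel t L :
  2 * sin (t/2) * sum_lt (fun i => cos (INR (S i) * t)) L = sin ((INR L + /2) * t) - sin (t/2).
Proof.
  induction L; cbn [sum_lt].
  - simpl. replace ((0 + /2) * t) with (t/2) by field. ring.
  - rewrite Rmult_plus_distr_l, IHL.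
    replace ((INR (S L) + /2) * t) with (INR (S L) * t + t/2) by (rewrite S_INR; field).
    replace ((INR L + /2) * t) with (INR (S L) * t - t/2) by (rewrite S_INR; field).
    rewrite sin_plus, sin_minus. ring.
Qed.

Definition saw_partial (L : nat) (t : R) : R :=
  sum_lt (fun m => sin (INR (S m) * t) / INR (S m)) L.

Lemma saw_partial_derive L t :
  is_derive (saw_partial L) t (sum_lt (fun m => cos (INR (S m) * t)) L).
Proof.
  induction L.
  - apply (is_derive_const (K := R_AbsRing) 0).
  - change (is_derive (fun t => saw_partial L t + sin (INR (S L) * t) / INR (S L)) t
      (sum_lt (fun m => cos (INR (S m) * t)) L + cos (INR (S L) * t))).
    assert (Ha : INR (S L) <> 0) by (apply not_0_INR; lia).
    set (a := INR (S L)) in *.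
    apply (is_derive_plus (K := R_AbsRing) (V := R_NormedModule)); [exact IHL |].
    auto_derive; [auto | field; auto].
Qed.

Lemma saw_partial_PI L : saw_partial L PI = 0.
Proof.
  unfold saw_partial. induction L; cbn [sum_lt]; auto.
  rewrite IHL, sin_INR_mul_PI. unfold Rdiv. ring.
Qed.

Lemma sin_half_le_between th c : 0 < th < 2 * PI ->
  Rmin th PI <= c <= Rmax th PI -> sin (th/2) <= sin (c/2).
Proof.
  intros H Hc. pose proof PI_RGT_0.
  destruct (Rle_dec th PI) as [Hle | Hgt].
  - rewrite Rmin_left, Rmax_right in Hc by lra. apply sin_incr_1; lra.
  - rewrite Rmin_right, Rmax_left in Hc by lra.
    rewrite <- (sin_PI_x (th/2)), <- (sin_PI_x (c/2)). apply sin_incr_1; lra.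
Qed.

Section SawtoothApproximation.
Variable L : nat.
Let lam := INR L + /2.

(* By the Dirichlet kernel identity the derivative of [saw_partial L t + t/2]
   is [sin (lam t) / (2 sin (t/2))]; the correction term cancels it up to
   O(1/lam), so [saw_corrected] is nearly constant away from t = 0, 2π. *)
Definition saw_corrected (t : R) : R :=
  saw_partial L t + t/2 + cos (lam * t) / (2 * lam * sin (t/2)).

Lemma lam_pos : 0 < lam.
Proof. unfold lam. pose proof (pos_INR L). lra. Qed.

Lemma saw_corrected_derive t : sin (t/2) <> 0 ->
  is_derive saw_corrected t (- (cos (lam * t) * cos (t/2)) / (4 * lam * sin (t/2) ^ 2)).
Proof.
  intros Hs. pose proof lam_pos as Hl.
  assert (HG : is_derive (fun t => t/2 + cos (lam * t) / (2 * lam * sin (t/2))) t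
     (/2 + (- sin (lam * t) * lam * (2 * lam * sin (t/2))
            - cos (lam * t) * (2 * lam * (cos (t/2) * /2))) / (2 * lam * sin (t/2)) ^ 2)).
  { auto_derive; change (t * /2) with (t/2).
    - repeat apply Rmult_integral_contrapositive_currified; auto; lra.
    - field. split; auto. lra. }
  pose proof (is_derive_plus (K := R_AbsRing) (V := R_NormedModule) _ _ _ _ _
                (saw_partial_derive L t) HG) as H.
  apply (is_derive_ext _ saw_corrected) in H.
  2:{ intros; unfold saw_corrected, plus; simpl. ring. }
  assert (D := dirichlet_kernel t L). fold lam in D.
  replace (- (cos (lam * t) * cos (t/2)) / (4 * lam * sin (t/2) ^ 2)) with
    (sum_lt (fun m => cos (INR (S m) * t)) L +
     (/2 + (- sin (lam * t) * lam * (2 * lam * sin (t/2))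
            - cos (lam * t) * (2 * lam * (cos (t/2) * /2))) / (2 * lam * sin (t/2)) ^ 2)).
  2:{ replace (sum_lt (fun m => cos (INR (S m) * t)) L)
        with ((sin (lam * t) - sin (t/2)) / (2 * sin (t/2))) by (rewrite <- D; field; auto).
      field. split; auto; lra. }
  exact H.
Qed.

Lemma saw_corrected_PI : saw_corrected PI = PI / 2.
Proof.
  unfold saw_corrected. rewrite saw_partial_PI. unfold lam.
  replace ((INR L + /2) * PI) with (INR L * PI + PI/2) by field.
  rewrite cos_plus, cos_PI2, sin_PI2, sin_INR_mul_PI. unfold Rdiv. ring.
Qed.

Lemma saw_corrected_near_PI th : 0 < th < 2 * PI ->
  Rabs (saw_corrected th - PI/2) <= PI * / (4 * lam * sin (th/2) ^ 2).
Proof.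
  intros Hth. pose proof PI_RGT_0. pose proof lam_pos.
  assert (Hs : 0 < sin (th/2)) by (apply sin_gt_0; lra).
  set (dP := fun t => - (cos (lam * t) * cos (t/2)) / (4 * lam * sin (t/2) ^ 2)).
  rewrite <- saw_corrected_PI.
  destruct (MVT_abs saw_corrected dP PI th) as [c [-> Hc]].
  { intros c Hc. apply is_derive_Reals, saw_corrected_derive.
    rewrite Rmin_comm, Rmax_comm in Hc. pose proof (sin_half_le_between th c Hth Hc). lra. }
  rewrite Rmin_comm, Rmax_comm in Hc.
  pose proof (sin_half_le_between th c Hth Hc) as Hsc.
  assert (Hd : Rabs (dP c) <= / (4 * lam * sin (th/2) ^ 2)).
  { unfold dP. apply Rabs_div_le_inv.
    - pose proof (COS_bound (lam * c)). pose proof (COS_bound (c/2)). split; nra.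
    - split; [apply Rmult_lt_0_compat; [lra | apply pow_lt; lra] |].
      apply Rmult_le_compat_l; [lra | apply pow_incr; lra]. }
  rewrite Rmult_comm. apply Rmult_le_compat; try apply Rabs_pos; auto.
  apply Rabs_le. lra.
Qed.

Lemma saw_partial_error th : 0 < th < 2 * PI ->
  Rabs (saw_partial L th - (PI - th)/2)
  <= PI * / (4 * lam * sin (th/2) ^ 2) + / (2 * lam * sin (th/2)).
Proof.
  intros Hth. pose proof PI_RGT_0. pose proof lam_pos.
  assert (Hs : 0 < sin (th/2)) by (apply sin_gt_0; lra).
  replace (saw_partial L th - (PI - th)/2)
    with ((saw_corrected th - PI/2) + (- cos (lam * th)) / (2 * lam * sin (th/2)))
    by (unfold saw_corrected; field; lra).
  eapply Rle_trans; [apply Rabs_triang | apply Rplus_le_compat].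
  - apply saw_corrected_near_PI; auto.
  - apply Rabs_div_le_inv; [pose proof (COS_bound (lam * th)); lra | nra].
Qed.

End SawtoothApproximation.

Definition angle (p j : nat) : R := PI * INR (S j) / INR p.

Lemma sin_angle_pos p j : (j < p - 1)%nat -> 0 < sin (angle p j).
Proof. intros Hj. apply sin_PI_frac_pos. lia. Qed.

Lemma cos_sum_roots_of_unity p k : (1 <= k < p)%nat ->
  sum_lt (fun j => cos (2 * INR k * angle p j)) (p - 1) = -1.
Proof.
  intros H. assert (Hp : 0 < INR p) by (apply lt_0_INR; lia).
  set (t := 2 * PI * INR k / INR p).
  assert (Hs : 0 < sin (t/2)).
  { replace (t/2) with (PI * INR k / INR p) by (unfold t; field; lra).
    apply sin_PI_frac_pos; lia. }
  pose proof (dirichlet_kernel t (p - 1)) as D.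
  rewrite (sum_lt_ext _ (fun i => cos (INR (S i) * t))).
  2:{ intros i _. f_equal. unfold t, angle. field. lra. }
  replace ((INR (p - 1) + / 2) * t) with (- (t/2) + 2 * INR k * PI) in D.
  2:{ rewrite minus_INR by lia. simpl INR. unfold t. field. lra. }
  rewrite sin_period, sin_neg in D.
  apply Rmult_eq_reg_l with (2 * sin (t/2)); [rewrite D; ring | lra].
Qed.

Lemma cot_mul_sin_even phi r : sin phi <> 0 ->
  cot phi * sin (2 * INR r * phi)
  = sum_lt (fun k => cos (2 * INR k * phi) + cos (2 * INR (S k) * phi)) r.
Proof.
  intros Hs. unfold cot. induction r; cbn [sum_lt].
  - simpl. rewrite Rmult_0_r, Rmult_0_l, sin_0. ring.
  - rewrite <- IHr.
    set (a := (2 * INR r + 1) * phi).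
    replace (2 * INR (S r) * phi) with (a + phi) by (unfold a; rewrite S_INR; ring).
    replace (2 * INR r * phi) with (a - phi) by (unfold a; ring).
    rewrite sin_plus, sin_minus, cos_plus, cos_minus. field. auto.
Qed.

Lemma sum_cot_mul_sin p r : (2 <= p)%nat -> (1 <= r <= p - 1)%nat ->
  sum_lt (fun j => cot (angle p j) * sin (2 * INR r * angle p j)) (p - 1) = INR p - 2 * INR r.
Proof.
  intros Hp Hr.
  rewrite (sum_lt_ext _ (fun j => sum_lt (fun k =>
     cos (2 * INR k * angle p j) + cos (2 * INR (S k) * angle p j)) r)).
  2:{ intros j Hj. apply cot_mul_sin_even, Rgt_not_eq, sin_angle_pos; auto. }
  rewrite sum_lt_swap.
  replace r with (1 + (r - 1))%nat at 1 by lia.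
  rewrite sum_lt_split. cbn [sum_lt].
  rewrite sum_lt_add, (cos_sum_roots_of_unity p 1) by lia.
  rewrite (sum_lt_ext _ (fun _ => 1)).
  2:{ intros. simpl INR. rewrite Rmult_0_r, Rmult_0_l, cos_0. reflexivity. }
  rewrite (sum_lt_ext (fun i => sum_lt _ _) (fun _ => -2)).
  2:{ intros i Hi. rewrite sum_lt_add, !cos_sum_roots_of_unity by lia. ring. }
  rewrite !sum_lt_const, !minus_INR by lia. simpl INR. ring.
Qed.

Lemma sum_cot_angle p : (2 <= p)%nat -> sum_lt (fun j => cot (angle p j)) (p - 1) = 0.
Proof.
  intros Hp. assert (Hp' : 0 < INR p) by (apply lt_0_INR; lia).
  enough (H : sum_lt (fun j => cot (angle p j)) (p - 1)
              = - sum_lt (fun j => cot (angle p j)) (p - 1)) by lra.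
  rewrite sum_lt_rev at 1.
  transitivity (sum_lt (fun j => -1 * cot (angle p j)) (p - 1));
    [| rewrite sum_lt_scal_l; ring].
  apply sum_lt_ext; intros i Hi.
  replace (angle p (p - 1 - 1 - i)) with (PI - angle p i).
  2:{ unfold angle. rewrite !S_INR, !minus_INR by lia. simpl INR. field. lra. }
  unfold cot. rewrite sin_PI_x, Rtrigo_facts.cos_pi_minus.
  field. apply Rgt_not_eq, sin_angle_pos; auto.
Qed.

Lemma c0_term_nonneg_le p k : (2 <= p)%nat ->
  0 <= c0_term p k <= / ((INR k + 1) * (INR k + 2)).
Proof.
  intros Hp. unfold c0_term.
  assert (Hm : (p * Nat.div k p <= k)%nat) by apply Nat.Div0.mul_div_le.
  apply le_INR in Hm. rewrite mult_INR in Hm.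
  set (x := INR (Nat.div k p)) in *. set (P := INR p) in *. set (K := INR k) in *.
  assert (HP : 2 <= P) by (apply INR_ge2; auto).
  assert (Hx : 0 <= x) by apply pos_INR. assert (HK : 0 <= K) by apply pos_INR.
  assert (HD : 0 < (K + 1) * (K + P + 1) * (K + 2) * (K + P))
    by (repeat apply Rmult_lt_0_compat; lra).
  assert (HN : 0 <= (K + 1 - P / 2 * x) * (x + 1)) by (apply Rmult_le_pos; nra).
  split.
  - apply Rmult_le_pos; [auto | apply Rlt_le, Rinv_0_lt_compat; auto].
  - rewrite <- (Rmult_1_l (/ ((K + 1) * (K + 2)))). fold (Rdiv 1 ((K + 1) * (K + 2))).
    apply Rdiv_le_cross; [auto | apply Rmult_lt_0_compat; lra |].
    assert ((x + 1) * (K + 1) <= (K + P) * (K + P + 1)) by (apply Rmult_le_compat; nra).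
    apply Rle_trans with ((x + 1) * (K + 1) * ((K + 1) * (K + 2))).
    + replace ((x + 1) * (K + 1) * ((K + 1) * (K + 2)))
        with ((K + 1) * (x + 1) * ((K + 1) * (K + 2))) by ring.
      apply Rmult_le_compat_r; [apply Rmult_le_pos; lra |].
      apply Rmult_le_compat_r; nra.
    + replace (1 * ((K + 1) * (K + P + 1) * (K + 2) * (K + P)))
        with ((K + P) * (K + P + 1) * ((K + 1) * (K + 2))) by ring.
      apply Rmult_le_compat_r; [apply Rmult_le_pos |]; lra.
Qed.

Lemma c0_term_block p n r : (r < p)%nat ->
  c0_term p (n * p + r) =
  ((INR n * INR p + INR r + 1 - INR p / 2 * INR n) * (INR n + 1)) /
  ((INR n * INR p + INR r + 1) * (INR n * INR p + INR r + INR p + 1) *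
   (INR n * INR p + INR r + 2) * (INR n * INR p + INR r + INR p)).
Proof.
  intros Hr. unfold c0_term.
  replace (Nat.div (n * p + r) p) with n
    by (rewrite Nat.div_add_l, Nat.div_small by lia; lia).
  rewrite plus_INR, mult_INR. f_equal; ring.
Qed.

Definition block_harmonic (p n : nat) : R := sum_lt (fun r => / (INR n * INR p + INR r + 1)) p.

Definition block_principal (p n : nat) : R :=
  sum_lt (fun r => (INR p - 2 * INR (S r)) / (INR n * INR p + INR (S r))) (p - 1).

Definition block_telescoping (p n : nat) : R := INR p * INR n ^ 2 * block_harmonic p n.

Definition block_remainder (p n : nat) : R :=
  INR p - (INR p - 1) / 2 * (/ (INR n * INR p + 1) - / (INR (S n) * INR p + 1))
  + / (INR n + 2) - / (INR n + 1).

Section BlockSum.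
Variables p n : nat.
Hypothesis Hp : (2 <= p)%nat.
Let P := INR p.
Let X := INR n.

Lemma sum_block_inv_plus2 :
  sum_lt (fun r => / (X * P + INR r + 2)) p = block_harmonic p n - / (X * P + 1) + / (X * P + P + 1).
Proof.
  transitivity (sum_lt (fun r => / (X * P + INR (S r) + 1)) p).
  { apply sum_lt_ext. intros i _. rewrite S_INR. f_equal; ring. }
  rewrite (sum_lt_shift (fun r => / (X * P + INR r + 1))).
  unfold block_harmonic. fold P X. simpl INR. fold P. rewrite Rplus_0_r. reflexivity.
Qed.

Lemma sum_block_inv_plusP1 :
  sum_lt (fun r => / (X * P + INR r + P + 1)) p = block_harmonic p (S n).
Proof.
  unfold block_harmonic. fold P. apply sum_lt_ext. intros i _. rewrite S_INR. fold X. f_equal; ring.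
Qed.

Lemma sum_block_inv_plusP :
  sum_lt (fun r => / (X * P + INR r + P)) p
  = block_harmonic p (S n) + / ((X + 1) * P) - / ((X + 1) * P + P).
Proof.
  pose proof (sum_lt_shift (fun r => / (X * P + INR r + P)) p) as H.
  rewrite (sum_lt_ext _ (fun r => / (INR (S n) * INR p + INR r + 1))) in H.
  2:{ intros i _. rewrite !S_INR. fold P X. f_equal; ring. }
  fold (block_harmonic p (S n)) in H. simpl INR in H at 2. fold P in H.
  replace (X * P + 0 + P) with ((X + 1) * P) in H by ring.
  replace (X * P + P + P) with ((X + 1) * P + P) in H by ring. lra.
Qed.

Lemma block_principal_harmonic :
  block_principal p n = (P + 2 * X * P) * (block_harmonic p n - / (X * P + P)) - 2 * (P - 1).
Proof.
  assert (2 <= P) by apply (INR_ge2 p Hp). assert (0 <= X) by apply pos_INR.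
  unfold block_principal. fold P X.
  rewrite (sum_lt_ext _ (fun r => (P + 2 * X * P) * / (X * P + INR r + 1) - 2)).
  2:{ intros i _. rewrite S_INR. pose proof (pos_INR i). field. nra. }
  rewrite sum_lt_sub, sum_lt_scal_l, sum_lt_const.
  replace (block_harmonic p n)
    with (sum_lt (fun r => / (X * P + INR r + 1)) (p - 1) + / (X * P + P)).
  2:{ unfold block_harmonic. replace p with (S (p - 1)) at 2 by lia. cbn [sum_lt]. fold X P.
      rewrite minus_INR by lia. simpl INR. fold P. f_equal. f_equal. ring. }
  rewrite minus_INR by lia. simpl INR. fold P. ring.
Qed.

(* Partial fractions in A = n p + r + 1: the block term has simple poles at
   A, A + 1, A + p - 1 and A + p, and summing each over r produces the two
   block harmonic sums H_n, H_(n+1) plus boundary terms. *)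
Lemma c0_term_block_sum :
  P * (P - 1) * (P - 2) * sum_lt (fun r => c0_term p (n * p + r)) p
  = block_principal p n + block_telescoping p n - block_telescoping p (S n) + block_remainder p n.
Proof.
  assert (HP : 2 <= P) by apply (INR_ge2 p Hp). assert (HX : 0 <= X) by apply pos_INR.
  rewrite <- sum_lt_scal_l.
  rewrite (sum_lt_ext _ (fun r => (X + 1) * ((P-2)*(-P*X/2) * / (X * P + INR r + 1)
        - (P-2)*(-P*X/2-P) * / (X * P + INR r + P + 1)
        - P*(-P*X/2-1) * / (X * P + INR r + 2) + P*(-P*X/2-P+1) * / (X * P + INR r + P)))).
  2:{ intros i Hi. rewrite c0_term_block by auto. fold P X.
      pose proof (pos_INR i). assert (0 <= X * P) by nra.
      field. repeat split; nra. }
  rewrite sum_lt_scal_l, !sum_lt_add, !sum_lt_sub, !sum_lt_scal_l.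
  fold (block_harmonic p n).
  rewrite sum_block_inv_plus2, sum_block_inv_plusP, sum_block_inv_plusP1, block_principal_harmonic.
  unfold block_telescoping, block_remainder. fold P X. rewrite S_INR. fold X.
  change (sum_lt (fun i => / (X * P + INR i + 1)) p) with (block_harmonic p n).
  generalize (block_harmonic p n) (block_harmonic p (S n)). clearbody P X. intros h1 h2.
  field. repeat split; nra.
Qed.

End BlockSum.

Lemma scaled_partial_sum_blocks p N : (2 <= p)%nat ->
  INR p * (INR p - 1) * (INR p - 2) * sum_lt (c0_term p) (N * p)
  = sum_lt (block_principal p) N - block_telescoping p N + sum_lt (block_remainder p) N.
Proof.
  intros Hp. rewrite sum_lt_blocks, <- sum_lt_scal_l.
  induction N; cbn [sum_lt].
  - unfold block_telescoping. simpl. ring.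
  - rewrite IHN, c0_term_block_sum by auto. ring.
Qed.

Lemma sum_block_remainder p N : (2 <= p)%nat ->
  sum_lt (block_remainder p) N
  = INR p * INR N - (INR p - 1) / 2 * (1 - / (INR N * INR p + 1)) + / (INR N + 1) - 1.
Proof.
  intros Hp. assert (HP : 0 < INR p) by (apply lt_0_INR; lia).
  induction N; cbn [sum_lt]; [simpl; field |].
  rewrite IHN. unfold block_remainder. rewrite S_INR. pose proof (pos_INR N).
  field. repeat split; nra.
Qed.

Lemma block_telescoping_expand p N : (2 <= p)%nat ->
  block_telescoping p N = INR p * INR N - (INR p + 1) / 2 +
    sum_lt (fun r => INR (S r) ^ 2 / (INR p * (INR N * INR p + INR (S r)))) p.
Proof.
  intros Hp. assert (HP : 0 < INR p) by (apply lt_0_INR; lia). pose proof (pos_INR N).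
  unfold block_telescoping, block_harmonic. rewrite <- sum_lt_scal_l.
  rewrite (sum_lt_ext _ (fun r => INR N - / INR p * INR (S r)
                                  + INR (S r) ^ 2 / (INR p * (INR N * INR p + INR (S r))))).
  2:{ intros r _. rewrite S_INR. pose proof (pos_INR r). field. split; [nra | lra]. }
  rewrite !sum_lt_add, sum_lt_sub, sum_lt_scal_l, sum_lt_const, sum_lt_INR_S. field. lra.
Qed.

Lemma sum_sq_over_block_le p N : (2 <= p)%nat ->
  0 <= sum_lt (fun r => INR (S r) ^ 2 / (INR p * (INR N * INR p + INR (S r)))) p
    <= INR p ^ 2 / (INR N + 1).
Proof.
  intros Hp. pose proof (INR_ge2 p Hp) as HP.
  pose proof (pos_INR N). assert (0 <= INR N * INR p) by (apply Rmult_le_pos; lra).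
  split.
  - apply sum_lt_nonneg. intros r _. pose proof (pos_INR r). rewrite S_INR.
    apply Rmult_le_pos; [apply pow_le; lra | apply Rlt_le, Rinv_0_lt_compat; nra].
  - apply Rle_trans with (sum_lt (fun _ => INR p / (INR N + 1)) p).
    + apply sum_lt_le. intros r Hr. assert (INR (S r) <= INR p) by (apply le_INR; lia).
      pose proof (pos_INR r). rewrite S_INR in *.
      apply Rdiv_le_cross; [nra | lra |].
      assert ((INR r + 1) ^ 2 <= INR p * INR p) by nra.
      apply Rle_trans with (INR p * INR p * (INR N * INR p + (INR r + 1)));
        [apply Rmult_le_compat; nra | nra].
    + rewrite sum_lt_const. unfold Rdiv. lra.
Qed.

Lemma telescoping_remainder_bound p N : (2 <= p)%nat ->
  Rabs (- block_telescoping p N + sum_lt (block_remainder p) N)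
  <= (INR p ^ 2 + INR p + 1) / (INR N + 1).
Proof.
  intros Hp. pose proof (INR_ge2 p Hp) as HP.
  pose proof (pos_INR N) as HN. assert (0 <= INR N * INR p) by (apply Rmult_le_pos; lra).
  rewrite block_telescoping_expand, sum_block_remainder by auto.
  pose proof (sum_sq_over_block_le p N Hp) as HQ.
  set (Q := sum_lt _ p) in *.
  assert (Ha : 0 <= (INR p - 1) / 2 * / (INR N * INR p + 1) <= INR p / (INR N + 1)).
  { split; [apply Rmult_le_pos; [lra | apply Rlt_le, Rinv_0_lt_compat; nra] |].
    replace ((INR p - 1) / 2 * / (INR N * INR p + 1)) with ((INR p - 1) / 2 / (INR N * INR p + 1))
      by (unfold Rdiv; ring).
    apply Rdiv_le_cross; nra. }
  assert (Hb : 0 < / (INR N + 1)) by (apply Rinv_0_lt_compat; lra).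
  replace (- (INR p * INR N - (INR p + 1) / 2 + Q)
           + (INR p * INR N - (INR p - 1) / 2 * (1 - / (INR N * INR p + 1)) + / (INR N + 1) - 1))
    with (- Q + (INR p - 1) / 2 * / (INR N * INR p + 1) + / (INR N + 1)) by (field; nra).
  replace ((INR p ^ 2 + INR p + 1) / (INR N + 1))
    with (INR p ^ 2 / (INR N + 1) + INR p / (INR N + 1) + / (INR N + 1)) by (field; lra).
  apply Rabs_le. split; lra.
Qed.

Lemma cot_saw_block_term p n r : (2 <= p)%nat -> (r < p - 1)%nat ->
  sum_lt (fun j => cot (angle p j) *
            (sin (INR (S (n * p + r)) * (2 * angle p j)) / INR (S (n * p + r)))) (p - 1)
  = (INR p - 2 * INR (S r)) / (INR n * INR p + INR (S r)).
Proof.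
  intros Hp Hr. assert (HP : 0 < INR p) by (apply lt_0_INR; lia).
  assert (Hm : INR (S (n * p + r)) = INR n * INR p + INR (S r))
    by (rewrite !S_INR, plus_INR, mult_INR; ring).
  assert (Hm0 : 0 < INR n * INR p + INR (S r))
    by (pose proof (pos_INR n); pose proof (pos_INR r); rewrite S_INR; nra).
  rewrite (sum_lt_ext _ (fun j => / (INR n * INR p + INR (S r)) *
             (cot (angle p j) * sin (2 * INR (S r) * angle p j)))).
  2:{ intros j Hj.
      replace (INR (S (n * p + r)) * (2 * angle p j))
        with (2 * INR (S r) * angle p j + 2 * INR (n * S j) * PI)
        by (rewrite Hm, mult_INR; unfold angle; field; lra).
      rewrite sin_period, Hm. field. lra. }
  rewrite sum_lt_scal_l, sum_cot_mul_sin by lia. field. lra.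
Qed.

Lemma cot_saw_block_last p n : (2 <= p)%nat ->
  sum_lt (fun j => cot (angle p j) *
            (sin (INR (S (n * p + (p - 1))) * (2 * angle p j)) / INR (S (n * p + (p - 1))))) (p - 1)
  = 0.
Proof.
  intros Hp. assert (HP : 0 < INR p) by (apply lt_0_INR; lia).
  rewrite (sum_lt_ext _ (fun _ => 0)); [rewrite sum_lt_const; ring |].
  intros j Hj. replace (S (n * p + (p - 1))) with (S n * p)%nat by lia.
  replace (INR (S n * p) * (2 * angle p j)) with (0 + 2 * INR (S n * S j) * PI)
    by (rewrite !mult_INR; unfold angle; field; lra).
  rewrite sin_period, sin_0. unfold Rdiv. ring.
Qed.

Lemma sum_block_principal_saw p N : (2 <= p)%nat ->
  sum_lt (block_principal p) N
  = sum_lt (fun j => cot (angle p j) * saw_partial (N * p) (2 * angle p j)) (p - 1).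
Proof.
  intros Hp.
  rewrite (sum_lt_ext (fun j => cot (angle p j) * saw_partial (N * p) (2 * angle p j))
    (fun j => sum_lt (fun n => sum_lt (fun r => cot (angle p j) *
       (sin (INR (S (n * p + r)) * (2 * angle p j)) / INR (S (n * p + r)))) p) N)).
  2:{ intros j _. unfold saw_partial. rewrite sum_lt_blocks, <- sum_lt_scal_l.
      apply sum_lt_ext; intros. symmetry. apply sum_lt_scal_l. }
  rewrite <- sum_lt_swap. apply sum_lt_ext. intros n _.
  rewrite <- sum_lt_swap.
  replace p with (S (p - 1)) at 2 by lia. cbn [sum_lt].
  rewrite cot_saw_block_last, Rplus_0_r by auto.
  apply sum_lt_ext. intros r Hr. symmetry. apply cot_saw_block_term; auto.
Qed.

Lemma angle_range p j : (j < p - 1)%nat -> 0 < angle p j < PI.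
Proof.
  intros Hj. pose proof PI_RGT_0. unfold angle.
  assert (HP : 0 < INR p) by (apply lt_0_INR; lia).
  assert (INR (S j) < INR p) by (apply lt_INR; lia).
  assert (0 < INR (S j)) by (apply lt_0_INR; lia).
  split; [apply Rdiv_lt_0_compat; nra |].
  apply Rmult_lt_reg_r with (INR p); auto. unfold Rdiv. rewrite Rmult_assoc, Rinv_l by lra. nra.
Qed.

Definition saw_error_const (p j : nat) : R :=
  PI / (4 * sin (angle p j) ^ 2) + / (2 * sin (angle p j)).

Lemma saw_error_const_nonneg p j : (j < p - 1)%nat -> 0 <= saw_error_const p j.
Proof.
  intros Hj. pose proof PI_RGT_0. pose proof (sin_angle_pos p j Hj).
  assert (0 < sin (angle p j) ^ 2) by (apply pow_lt; lra).
  unfold saw_error_const. apply Rplus_le_le_0_compat; apply Rlt_le;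
    [apply Rdiv_lt_0_compat | apply Rinv_0_lt_compat]; lra.
Qed.

Lemma saw_partial_error_at p j N : (j < p - 1)%nat ->
  Rabs (saw_partial (N * p) (2 * angle p j) - (PI - 2 * angle p j) / 2)
  <= saw_error_const p j / (INR N + /2).
Proof.
  intros Hj. pose proof (angle_range p j Hj). pose proof (sin_angle_pos p j Hj).
  pose proof (saw_error_const_nonneg p j Hj).
  eapply Rle_trans; [apply saw_partial_error; lra |].
  replace (2 * angle p j / 2) with (angle p j) by field.
  assert (HL : INR N + /2 <= INR (N * p) + /2).
  { apply Rplus_le_compat_r, le_INR. nia. }
  assert (0 < INR N + /2) by (pose proof (pos_INR N); lra).
  replace (PI * / (4 * (INR (N * p) + / 2) * sin (angle p j) ^ 2) + / (2 * (INR (N * p) + / 2) * sin (angle p j)))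
    with (saw_error_const p j / (INR (N * p) + / 2)) by (unfold saw_error_const; field; lra).
  unfold Rdiv. apply Rmult_le_compat_l; auto. apply Rinv_le_contravar; lra.
Qed.

Definition saw_limit (p : nat) : R :=
  sum_lt (fun j => cot (angle p j) * ((PI - 2 * angle p j) / 2)) (p - 1).

Definition error_const (p : nat) : R :=
  sum_lt (fun j => Rabs (cot (angle p j)) * saw_error_const p j) (p - 1) + (INR p ^ 2 + INR p + 1).

Lemma error_const_nonneg p : 0 <= error_const p.
Proof.
  unfold error_const. apply Rplus_le_le_0_compat.
  - apply sum_lt_nonneg. intros j Hj.
    apply Rmult_le_pos; [apply Rabs_pos | apply saw_error_const_nonneg; auto].
  - pose proof (pos_INR p). nra.
Qed.

Lemma scaled_partial_sum_error p N : (2 <= p)%nat ->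
  Rabs (INR p * (INR p - 1) * (INR p - 2) * sum_lt (c0_term p) (N * p) - saw_limit p)
  <= error_const p / (INR N + /2).
Proof.
  intros Hp. rewrite scaled_partial_sum_blocks, sum_block_principal_saw by auto.
  assert (HN : 0 < INR N + /2) by (pose proof (pos_INR N); lra).
  replace (sum_lt (fun j => cot (angle p j) * saw_partial (N * p) (2 * angle p j)) (p - 1)
           - block_telescoping p N + sum_lt (block_remainder p) N - saw_limit p)
    with (sum_lt (fun j => cot (angle p j) *
            (saw_partial (N * p) (2 * angle p j) - (PI - 2 * angle p j) / 2)) (p - 1)
          + (- block_telescoping p N + sum_lt (block_remainder p) N)).
  2:{ unfold saw_limit.
      rewrite (sum_lt_ext (fun j => cot (angle p j) *
                 (saw_partial (N * p) (2 * angle p j) - (PI - 2 * angle p j) / 2))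
               (fun j => cot (angle p j) * saw_partial (N * p) (2 * angle p j)
                         - cot (angle p j) * ((PI - 2 * angle p j) / 2))) by (intros; ring).
      rewrite sum_lt_sub. ring. }
  unfold error_const, Rdiv. rewrite Rmult_plus_distr_r, <- sum_lt_scal_r.
  eapply Rle_trans; [apply Rabs_triang | apply Rplus_le_compat].
  - apply sum_lt_abs_le. intros j Hj. rewrite Rabs_mult, Rmult_assoc.
    apply Rmult_le_compat_l; [apply Rabs_pos | apply saw_partial_error_at; auto].
  - eapply Rle_trans; [apply telescoping_remainder_bound; auto |].
    assert (0 <= INR p ^ 2 + INR p + 1) by (pose proof (pos_INR p); nra).
    apply Rmult_le_compat_l; auto. apply Rinv_le_contravar; lra.
Qed.

Lemma saw_limit_c0 p : (2 <= p)%nat -> saw_limit p = PI * c0 1 p.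
Proof.
  intros Hp. assert (HP : 0 < INR p) by (apply lt_0_INR; lia).
  unfold saw_limit, c0, sum_f. rewrite sum_f_R0_sum_lt.
  replace (S (p - 1 - 1)) with (p - 1)%nat by lia.
  rewrite (sum_lt_ext _ (fun j => PI / 2 * cot (angle p j)
                                  + (- PI / INR p) * (INR (S j) * cot (angle p j)))).
  2:{ intros. unfold angle. field. lra. }
  rewrite sum_lt_add, !sum_lt_scal_l, sum_cot_angle, Rmult_0_r, Rplus_0_l by auto.
  rewrite (sum_lt_ext (fun k => INR (k + 1) / INR p * cot (PI * INR (k + 1) * INR 1 / INR p))
             (fun k => / INR p * (INR (S k) * cot (angle p k)))).
  2:{ intros k _. replace (k + 1)%nat with (S k) by lia. unfold angle. simpl (INR 1).
      unfold Rdiv. rewrite Rmult_1_r. ring. }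
  rewrite sum_lt_scal_l. field. lra.
Qed.

Lemma c0_series_cv p : (2 <= p)%nat -> { l | infinite_sum (c0_term p) l }.
Proof.
  intros Hp. apply growing_cv.
  - intros n. simpl. pose proof (c0_term_nonneg_le p (S n) Hp). lra.
  - exists 1. intros x [i ->]. rewrite sum_f_R0_sum_lt.
    apply Rle_trans with (sum_lt (fun k => / ((INR k + 1) * (INR k + 2))) (S i)).
    + apply sum_lt_le. intros. apply c0_term_nonneg_le; auto.
    + rewrite sum_lt_inv_consecutive.
      assert (0 < / (INR (S i) + 1)) by (apply Rinv_0_lt_compat; pose proof (pos_INR (S i)); lra).
      lra.
Qed.

Lemma block_partial_sums_cv p l : (1 <= p)%nat -> infinite_sum (c0_term p) l ->
  Un_cv (fun N => sum_lt (c0_term p) (S N * p)) l.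
Proof.
  intros Hp Hl.
  apply (Un_cv_subseq _ l (fun N => (S N * p - 1)%nat)) in Hl; [| intros N; simpl; nia].
  intros eps Heps. destruct (Hl eps Heps) as [N0 HN0]. exists N0. intros n Hn.
  specialize (HN0 n Hn). simpl in HN0. rewrite sum_f_R0_sum_lt in HN0.
  replace (S (p + n * p - 1)) with (S n * p)%nat in HN0 by (simpl; lia). exact HN0.
Qed.

Lemma scaled_block_partial_sums_cv p : (2 <= p)%nat ->
  Un_cv (fun N => INR p * (INR p - 1) * (INR p - 2) * sum_lt (c0_term p) (S N * p)) (PI * c0 1 p).
Proof.
  intros Hp. rewrite <- saw_limit_c0 by auto.
  apply Un_cv_of_inv_bound with (error_const p); [apply error_const_nonneg |].
  intros N. eapply Rle_trans; [apply scaled_partial_sum_error; auto |].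
  pose proof (error_const_nonneg p). pose proof (pos_INR N).
  unfold Rdiv. apply Rmult_le_compat_l; auto. apply Rinv_le_contravar; [lra | rewrite S_INR; lra].
Qed.

Lemma Un_cv_scal_l c u l : Un_cv u l -> Un_cv (fun n => c * u n) (c * l).
Proof.
  apply (CV_mult (fun _ => c)). intros eps Heps. exists O. intros.
  unfold Rdist. rewrite Rminus_diag, Rabs_R0. lra.
Qed.

Theorem theorem1 (p : nat) (hp : (2 <= p)%nat) :
  exists S : R,
    infinite_sum (c0_term p) S /\
    c0 1 p = INR p * (INR p - 1) * (INR p - 2) / PI * S.
Proof.
  destruct (c0_series_cv p hp) as [l Hl].
  exists l. split; [exact Hl |].
  assert (Hlim : PI * c0 1 p = INR p * (INR p - 1) * (INR p - 2) * l).
  { apply (UL_sequence _ _ _ (scaled_block_partial_sums_cv p hp)).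
    apply Un_cv_scal_l, block_partial_sums_cv; [lia | exact Hl]. }
  pose proof PI_RGT_0. apply Rmult_eq_reg_l with PI; [rewrite Hlim; field |]; lra.
Qed.
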